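(* Let $G=(V,E)$ be a finite directed acyclic graph with nonnegative edge costs $c(u,v)$, a start node $s$ and a target node $t$, where $t$ is the unique node with no outgoing edges. Let $b>1$. Then for the sophisticated agent with present-bias parameter $b$ (with ties in its choices broken arbitrarily), $C_s(s)\le b\cdot C_o(s)$; that is, the cost ratio $C_s(s)/C_o(s)$ is at most $b$.
   Context: $C_o(u)$ denotes the minimum total cost of a directed path from $u$ to $t$. The sophisticated agent with present-bias parameter $b$ is defined recursively over a reverse topological order: $C_s(t)=0$, and for $u\neq t$, $S_s(u)\in\arg\min_{v:(u,v)\in E}\big(b\cdot c(u,v)+C_s(v)\big)$ and $C_s(u)=c(u,S_s(u))+C_s(S_s(u))$. Starting at $s$ the agent follows $s, S_s(s), S_s(S_s(s)),\dots$ until it reaches $t$, incurring total cost $C_s(s)$. The cost ratio is $C_s(s)/C_o(s)$. *)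

From mathcomp Require Import all_boot all_order all_algebra.
Set Implicit Arguments. Unset Strict Implicit. Unset Printing Implicit Defensive.
Import Order.TTheory GRing.Theory Num.Theory.
Local Open Scope ring_scope.

Section Defs.
Variables (R : realFieldType) (V : finType).

Fixpoint path_cost (c : V -> V -> R) (u : V) (p : seq V) : R :=
  if p is v :: p' then c u v + path_cost c v p' else 0.

Definition acyclic (E : rel V) : Prop :=
  forall v p, path E v p -> last v p = v -> p = [::].

Definition unique_sink (E : rel V) (t : V) : Prop :=
  forall u, (forall v, ~~ E u v) <-> u = t.

Definition is_opt_cost (E : rel V) (c : V -> V -> R) (t u : V) (co : R) : Prop :=
  (exists2 p, path E u p /\ last u p = t & path_cost c u p = co) /\
  (forall p, path E u p -> last u p = t -> co <= path_cost c u p).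

(* (S, Cs) is a sophisticated agent with bias b: S is the choice (successor)
   function, chosen with arbitrary tie-breaking among the minimizers, and
   Cs the induced cost-to-go. *)
Definition sophisticated (E : rel V) (c : V -> V -> R) (t : V) (b : R)
    (S : V -> V) (Cs : V -> R) : Prop :=
  Cs t = 0 /\
  (forall u, u != t ->
     [/\ E u (S u),
         (forall v, E u v -> b * c u (S u) + Cs (S u) <= b * c u v + Cs v)
       & Cs u = c u (S u) + Cs (S u)]).

End Defs.

From mathcomp Require Import all_boot all_order all_algebra.
Import Order.TTheory GRing.Theory Num.Theory.
Set Implicit Arguments. Unset Strict Implicit.
Local Open Scope ring_scope.

(* At a node u with an edge to v, the agent pays
   Cs u = c(u, S u) + Cs (S u) <= b c(u, S u) + Cs (S u) <= b c(u, v) + Cs v,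
   the first step because b >= 1 and costs are nonnegative, the second by the
   agent's choice.  Telescoping this along an optimal path gives Cs s <= b C_o(s). *)

Lemma unique_sink_edge_neq (V : finType) (E : rel V) (t u v : V) :
  unique_sink E t -> E u v -> u != t.
Proof.
move=> sink_t Euv; apply/eqP => /(proj2 (sink_t u))/(_ v).
by rewrite Euv.
Qed.

Section SophisticatedBound.
Variables (R : realFieldType) (V : finType) (E : rel V) (c : V -> V -> R).
Variables (t : V) (b : R) (S : V -> V) (Cs : V -> R).
Hypothesis sink_t : unique_sink E t.
Hypothesis c_ge0 : forall u v, E u v -> 0 <= c u v.
Hypothesis b_ge1 : 1 <= b.
Hypothesis soph : sophisticated E c t b S Cs.

Lemma sophisticated_edge_le u v : E u v -> Cs u <= b * c u v + Cs v.
Proof.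
move=> Euv; have [_ /(_ u (unique_sink_edge_neq sink_t Euv))] := soph.
case=> ES choice_min ->.
apply: le_trans (choice_min v Euv); rewrite lerD2r.
by rewrite -{1}(mul1r (c u (S u))) ler_wpM2r ?c_ge0.
Qed.

Lemma sophisticated_cost_le_path u p :
  path E u p -> last u p = t -> Cs u <= b * path_cost c u p.
Proof.
elim: p u => [|v p IHp] u /=.
  by move=> _ ->; rewrite mulr0 (proj1 soph).
case/andP=> Euv p_path p_last; rewrite mulrDr.
apply: le_trans (sophisticated_edge_le Euv) _.
by rewrite lerD2l IHp.
Qed.

End SophisticatedBound.

Theorem theorem1 (R : realFieldType) (V : finType) (E : rel V)
    (c : V -> V -> R) (s t : V) (b : R)
    (S : V -> V) (Cs : V -> R) (co : R) :
  acyclic E ->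
  unique_sink E t ->
  (forall u v, E u v -> 0 <= c u v) ->
  1 < b ->
  sophisticated E c t b S Cs ->
  is_opt_cost E c t s co ->
  Cs s <= b * co.
Proof.
move=> _ sink_t c_ge0 b_gt1 soph [[p [p_path p_last] <-] _].
by apply: (sophisticated_cost_le_path sink_t c_ge0 _ soph p_path p_last); exact: ltW.
Qed.
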